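(* For $n\ge1$ and $k\in[n]$, let $a_{n,k}$ be the number of permutations $\pi\in\mathcal S_n$ avoiding $(123,\{0,2\},\emptyset)$ with $\pi_1=k$. Then \[a_{n,k}=\begin{cases}(k-1)!\,k^{\,n-k}&\text{for }k=1,2,\dots,n-2,\\ (n-1)!&\text{if }k=n-1\text{ or }k=n.\end{cases}\]
   Context: For $n\ge1$, $\mathcal S_n$ is the set of permutations $\pi=\pi_1\cdots\pi_n$ of $[n]$. A bi-vincular pattern of length $k$ is a triple $p=(\sigma,X,Y)$ with $\sigma\in\mathcal S_k$ and $X,Y\subseteq\{0,1,\dots,k\}$. A permutation $\pi\in\mathcal S_n$ contains $p$ if there are indices $1\le i_1<\dots<i_k\le n$ such that $(\pi_{i_1},\dots,\pi_{i_k})$ is order-isomorphic to $\sigma$ and, letting $j_1<\dots<j_k$ be the values $\pi_{i_1},\dots,\pi_{i_k}$ sorted increasingly and setting $i_0=j_0=0$, $i_{k+1}=j_{k+1}=n+1$, one has $i_{x+1}=i_x+1$ for all $x\in X$ and $j_{y+1}=j_y+1$ for all $y\in Y$. Otherwise $\pi$ avoids $p$. *)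

From mathcomp Require Import all_boot all_fingroup.
Set Implicit Arguments. Unset Strict Implicit. Unset Printing Implicit Defensive.

(* Conventions: a permutation pi : 'S_n maps 0-based positions to 0-based
   values; the paper's pi_i (1-based) is (pi (i-1)).+1.  An occurrence is
   given by a strictly increasing f : 'I_k -> 'I_n (0-based positions
   i_1 < ... < i_k).  We build the paper's lists
     i_0 = 0, i_1, ..., i_k, i_{k+1} = n+1   (1-based positions)
     j_0 = 0, j_1 < ... < j_k, j_{k+1} = n+1 (1-based sorted values). *)

Definition occ_positions n k (f : {ffun 'I_k -> 'I_n}) : seq nat :=
  0 :: [seq (f a).+1 | a <- enum 'I_k] ++ [:: n.+1].

Definition occ_values n k (pi : 'S_n) (f : {ffun 'I_k -> 'I_n}) : seq nat :=
  0 :: sort leq [seq (pi (f a)).+1 | a <- enum 'I_k] ++ [:: n.+1].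

Definition bv_contains n k (sigma : 'S_k) (X Y : {set 'I_k.+1}) (pi : 'S_n) : bool :=
  [exists f : {ffun 'I_k -> 'I_n},
    [&& [forall a : 'I_k, forall b : 'I_k, (a < b) ==> (f a < f b)],
        [forall a : 'I_k, forall b : 'I_k,
            (sigma a < sigma b) == (pi (f a) < pi (f b))],
        [forall x in X, nth 0 (occ_positions f) x.+1 == (nth 0 (occ_positions f) x).+1]
      & [forall y in Y, nth 0 (occ_values pi f) y.+1 == (nth 0 (occ_values pi f) y).+1]]].

Definition bv_avoids n k (sigma : 'S_k) (X Y : {set 'I_k.+1}) (pi : 'S_n) : bool :=
  ~~ bv_contains sigma X Y pi.

Definition pat123 : 'S_3 := 1%g.
Definition X02 : {set 'I_4} := [set (@Ordinal 4 0 isT); (@Ordinal 4 2 isT)].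
Definition Y0 : {set 'I_4} := set0.

Definition a_nk (n k : nat) : nat :=
  #|[set pi : 'S_n | bv_avoids pat123 X02 Y0 pi &&
      [exists i : 'I_n, (val i == 0) && ((pi i).+1 == k)]]|.

From mathcomp Require Import all_boot all_fingroup zify.
Set Implicit Arguments. Unset Strict Implicit. Unset Printing Implicit Defensive.

(* Read a permutation as the list c :: t of its values (0-based, so c = k - 1).
   It avoids the pattern iff t has no two adjacent entries y < z with y > c.
   The maximum can start no such ascent, and it ends one iff it follows an
   entry larger than c.  So deleting the maximum maps the avoiders of length
   n + 1 k-to-one onto those of length n, the preimages being obtained by
   inserting the maximum right after one of the k values 0, ..., c.  When c is
   itself the maximum nothing is forbidden, which gives (k-1)! avoiders of
   length k, hence (k-1)! k^(n-k) in general. *)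

Section InsertAfter.
Variable T : eqType.
Implicit Types (x m : T) (a b t : seq T).

Fixpoint insert_after x m t : seq T :=
  if t is y :: t' then (if y == x then y :: m :: t' else y :: insert_after x m t')
  else [::].

Lemma insert_after_cat x m a b :
  x \notin a -> insert_after x m (a ++ x :: b) = a ++ x :: m :: b.
Proof.
elim: a => [|y a IH] /=; first by rewrite eqxx.
by rewrite in_cons negb_or eq_sym => /andP[/negbTE -> /IH ->].
Qed.

Lemma insert_afterP x m t : x \in t ->
  exists a b, [/\ x \notin a, t = a ++ x :: b & insert_after x m t = a ++ x :: m :: b].
Proof.
elim: t => [|y t IH] //=; rewrite in_cons eq_sym; case: eqP => [->|yx] /= xt.
  by exists [::], t.
have [a [b [xa -> ->]]] := IH xt; exists (y :: a), b.
by rewrite in_cons negb_or xa andbT; split=> //; apply/eqP=> /esym.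
Qed.

Lemma head_insert_after x m t y0 : head y0 (insert_after x m t) = head y0 t.
Proof. by case: t => //= y t; case: ifP. Qed.

Lemma perm_insert_after x m t : x \in t -> perm_eq (insert_after x m t) (m :: t).
Proof.
case/(insert_afterP m) => a [b [_ -> ->]].
rewrite -cat_rcons -[m :: _]cat1s -[_ ++ x :: b]cat_rcons.
exact: (permEl (perm_catCA (rcons a x) [:: m] b)).
Qed.

Lemma insert_after_inj x1 x2 m t1 t2 :
  m \notin t1 -> m \notin t2 -> x1 \in t1 -> x2 \in t2 ->
  insert_after x1 m t1 = insert_after x2 m t2 -> t1 = t2 /\ x1 = x2.
Proof.
have index_m a x b : m \notin a ++ x :: b -> index m (a ++ x :: m :: b) = size a + 1.
  rewrite mem_cat in_cons !negb_or => /and3P[ma mx _].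
  by rewrite index_cat (negbTE ma) /= eq_sym (negbTE mx) eqxx.
move=> mt1 mt2 /(insert_afterP m) [a1 [b1 [_ Et1 ->]]].
move=> /(insert_afterP m) [a2 [b2 [_ Et2 ->]]] E.
have /eqP := congr1 (index m) E; rewrite !index_m -?Et1 -?Et2 // eqn_add2r => /eqP Ea.
move/eqP: E; rewrite eqseq_cat // => /andP[/eqP ea /eqP[ex eb]].
by rewrite Et1 Et2 ea ex eb.
Qed.

End InsertAfter.

Lemma perm_iotaS n s : perm_eq s (iota 0 n.+1) = perm_eq s (n :: iota 0 n).
Proof.
by rewrite -addn1 iotaD add0n cats1 [perm_eq s _]perm_sym perm_rcons perm_sym.
Qed.

Lemma mem_perm_iota n s x : perm_eq s (iota 0 n) -> (x \in s) = (x < n).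
Proof. by move/perm_mem ->; rewrite mem_iota. Qed.

Definition no_rise_above (c : nat) : rel nat := fun y z => (c < y) ==> (z <= y).

Definition rise_free (s : seq nat) : bool := sorted (no_rise_above (head 0 s)) s.

Lemma no_rise_above_low c x z : x <= c -> no_rise_above c x z.
Proof. by rewrite /no_rise_above ltnNge => ->. Qed.

Lemma path_no_rise_above_low c x t :
  x <= c -> path (no_rise_above c) x t = sorted (no_rise_above c) t.
Proof. by move=> xc; apply/path_min_sorted/allP => z _; apply: no_rise_above_low. Qed.

Lemma path_no_rise_above_top c m t : all (fun z => z <= m) t ->
  path (no_rise_above c) m t = sorted (no_rise_above c) t.
Proof.
move=> /allP tm; apply/path_min_sorted/allP => z /tm zm.
by rewrite /no_rise_above zm implybT.
Qed.

Lemma sorted_no_rise_above_bounded c s :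
  all (fun z => z <= c) s -> sorted (no_rise_above c) s.
Proof.
elim: s => //= y s IH /andP[yc sc].
by rewrite path_no_rise_above_low // IH.
Qed.

Lemma sorted_no_rise_above_insert c x m t :
  x <= c -> x \in t -> all (fun z => z <= m) t ->
  sorted (no_rise_above c) (insert_after x m t) = sorted (no_rise_above c) t.
Proof.
move=> xc /(insert_afterP m) [a [b [_ -> ->]]]; rewrite all_cat /= => /and3P[_ _ bm].
rewrite !sorted_cat_cons /= no_rise_above_low //.
by rewrite path_no_rise_above_top // path_no_rise_above_low.
Qed.

Definition avoiders n k : seq (seq nat) :=
  [seq s <- permutations (iota 0 n) | rise_free s & head 0 s == k.-1].

Lemma mem_avoiders n k s :
  s \in avoiders n k = [&& perm_eq s (iota 0 n), rise_free s & head 0 s == k.-1].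
Proof. by rewrite mem_filter mem_permutations andbC. Qed.

Lemma mem_avoiders_insert_max n k x t : x \in t -> x <= head 0 t ->
  (insert_after x n t \in avoiders n.+1 k) = (t \in avoiders n k).
Proof.
move=> xt xc; rewrite !mem_avoiders perm_iotaS (permPl (perm_insert_after n xt)).
rewrite perm_cons /rise_free !head_insert_after.
case P: (perm_eq t (iota 0 n)) => //=; rewrite sorted_no_rise_above_insert //.
by apply/allP => z; rewrite (mem_perm_iota _ P) => /ltnW.
Qed.

Lemma avoiders_remove_max n k s : 0 < k <= n -> s \in avoiders n.+1 k ->
  exists2 t, t \in avoiders n k & exists2 x, x < k & s = insert_after x n t.
Proof.
move=> /andP[k0 kn] sA; have := sA; rewrite mem_avoiders => /and3P[P rf /eqP hs].
have ns : n \in s by rewrite (mem_perm_iota _ P).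
have Us : uniq s by rewrite (perm_uniq P) iota_uniq.
case/splitPr: ns sA P rf hs Us => u1 u2.
case/lastP: u1 => [|a p] sA P rf hs Us.
  by move: hs => /=; lia.
rewrite cat_rcons in sA P rf hs Us *.
have [pa pn] : p \notin a /\ p != n.
  move: Us; rewrite cat_uniq /= in_cons !negb_or.
  by move=> /and3P[_ /andP[-> _] /andP[/andP[]]].
have {}pn : p < n.
  have : p \in a ++ [:: p, n & u2] by rewrite mem_cat mem_head orbT.
  by rewrite (mem_perm_iota _ P) ltnS leq_eqVlt (negbTE pn).
have pc : p <= k.-1.
  move: rf; rewrite /rise_free hs sorted_cat_cons => /andP[_] /=.
  by rewrite /no_rise_above [n <= p]leqNgt pn implybF -leqNgt => /andP[].
exists (a ++ p :: u2).
  rewrite -(@mem_avoiders_insert_max _ _ p) ?insert_after_cat //.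
    by rewrite mem_cat mem_head orbT.
  by rewrite -hs in pc; case: (a) pc.
by exists p; [rewrite -ltnS prednK in pc | rewrite insert_after_cat].
Qed.

Lemma uniq_avoiders n k : uniq (avoiders n k).
Proof. exact/filter_uniq/permutations_uniq. Qed.

Lemma perm_avoiders_succ n k : 0 < k <= n ->
  perm_eq (avoiders n.+1 k) [seq insert_after x n t | t <- avoiders n k, x <- iota 0 k].
Proof.
move=> hk; have /andP[_ kn] := hk.
have memA t x : t \in avoiders n k -> x \in iota 0 k ->
    [/\ n \notin t, x \in t & x <= head 0 t].
  rewrite mem_avoiders mem_iota => /and3P[P _ /eqP ->] xk.
  by rewrite !(mem_perm_iota _ P) ltnn; split=> //; lia.
apply: uniq_perm; first exact: uniq_avoiders.
  apply: allpairs_uniq; [exact: uniq_avoiders | exact: iota_uniq |].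
  move=> _ _ /allpairsP[[t1 x1] /= [t1A x1k ->]] /allpairsP[[t2 x2] /= [t2A x2k ->]] E.
  have [nt1 x1t _] := memA _ _ t1A x1k; have [nt2 x2t _] := memA _ _ t2A x2k.
  by have [-> ->] := insert_after_inj nt1 nt2 x1t x2t E.
move=> s; apply/idP/allpairsP => [sA | [[t x] /= [tA]]].
  have [t tA [x xk ->]] := avoiders_remove_max hk sA.
  by exists (t, x); rewrite mem_iota xk.
move=> xk ->; have [_ xt xc] := memA _ _ tA xk.
by rewrite mem_avoiders_insert_max.
Qed.

Lemma perm_avoiders_head_max c :
  perm_eq (avoiders c.+1 c.+1) (map (cons c) (permutations (iota 0 c))).
Proof.
apply: uniq_perm; first exact: uniq_avoiders.
  by rewrite map_inj_uniq ?permutations_uniq // => x y [].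
move=> s; rewrite mem_avoiders; apply/idP/mapP => [|[u]]; last first.
  rewrite mem_permutations => P ->.
  rewrite perm_iotaS perm_cons P eqxx andbT /rise_free /=.
  rewrite path_no_rise_above_low //; apply/sorted_no_rise_above_bounded/allP => y.
  by rewrite (mem_perm_iota _ P) => /ltnW.
case: s => [|c' u] /and3P[P _ /= /eqP hs]; first by have := perm_size P.
exists u; last by rewrite hs.
by move: P; rewrite hs perm_iotaS perm_cons mem_permutations.
Qed.

Lemma size_avoiders k d : 0 < k -> size (avoiders (k + d) k) = k.-1`! * k ^ d.
Proof.
move=> k0; elim: d => [|d IH].
  case: k k0 => // c _; rewrite addn0 muln1 (perm_size (perm_avoiders_head_max c)).
  by rewrite size_map size_permutations ?iota_uniq // size_iota.
rewrite addnS (perm_size (perm_avoiders_succ _)) ?k0 ?leq_addr //.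
by rewrite size_allpairs IH size_iota expnS -mulnA [_ * k]mulnC.
Qed.

Definition perm_seq n (pi : 'S_n) : seq nat := [seq val (pi i) | i <- enum 'I_n].

Lemma size_perm_seq n (pi : 'S_n) : size (perm_seq pi) = n.
Proof. by rewrite size_map size_enum_ord. Qed.

Lemma nth_perm_seq n (pi : 'S_n) (i : 'I_n) : nth 0 (perm_seq pi) i = pi i.
Proof. by rewrite (nth_map i) ?size_enum_ord // nth_ord_enum. Qed.

Lemma perm_seq_inj n : injective (@perm_seq n).
Proof.
move=> p q E; apply/permP => i; apply: val_inj.
by rewrite /= -!nth_perm_seq E.
Qed.

Lemma perm_seq_iota n (pi : 'S_n) : perm_eq (perm_seq pi) (iota 0 n).
Proof.
apply: uniq_perm; [|exact: iota_uniq|].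
  by rewrite map_inj_uniq ?enum_uniq // => x y /val_inj /perm_inj.
move=> y; rewrite mem_iota /=; apply/mapP/idP => [[i _ ->] | yn]; first exact: ltn_ord.
by exists (pi^-1 (Ordinal yn))%g; rewrite ?mem_enum ?permKV.
Qed.

Lemma perm_seq_onto n s : perm_eq s (iota 0 n) -> exists pi : 'S_n, perm_seq pi = s.
Proof.
move=> P; have Ss : size s = n by rewrite (perm_size P) size_iota.
have sn (i : 'I_n) : nth 0 s i < n by rewrite -(mem_perm_iota _ P) mem_nth ?Ss.
have f_inj : injective (fun i => Ordinal (sn i)).
  move=> i j [] /eqP; rewrite nth_uniq ?Ss ?(perm_uniq P) ?iota_uniq //.
  by move/eqP/val_inj.
exists (perm f_inj); apply: (@eq_from_nth _ 0); rewrite size_perm_seq ?Ss // => i ilt.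
by rewrite -[i]/(val (Ordinal ilt)) nth_perm_seq permE.
Qed.

Lemma perm_eq_perm_seqs n :
  perm_eq (map (@perm_seq n) (enum 'S_n)) (permutations (iota 0 n)).
Proof.
apply: uniq_perm; [|exact: permutations_uniq|].
  by rewrite (map_inj_uniq (@perm_seq_inj n)) enum_uniq.
move=> s; rewrite mem_permutations; apply/mapP/idP => [[pi _ ->]|P].
  exact: perm_seq_iota.
by have [pi <-] := perm_seq_onto P; exists pi; rewrite ?mem_enum.
Qed.

Lemma enum_ord3 :
  enum 'I_3 = [:: @Ordinal 3 0 isT; @Ordinal 3 1 isT; @Ordinal 3 2 isT].
Proof. by apply: (inj_map val_inj); rewrite val_enum_ord. Qed.

Lemma bv_containsP m (pi : 'S_m.+1) :
  reflect (exists i j : 'I_m.+1, j = i.+1 :> nat /\ pi ord0 < pi i < pi j)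
          (bv_contains pat123 X02 Y0 pi).
Proof.
apply: (iffP existsP) => [[f /and4P[_ /forallP ord /forallP adj _]] | [i [j [ji ord]]]].
  have := adj (@Ordinal 4 0 isT); have := adj (@Ordinal 4 2 isT).
  rewrite !inE /occ_positions enum_ord3 /= => /eqP[ji] /eqP[f0].
  have := ord (@Ordinal 3 0 isT); have := ord (@Ordinal 3 1 isT).
  move=> /forallP/(_ (@Ordinal 3 2 isT)) /eqP o12 /forallP/(_ (@Ordinal 3 1 isT)) /eqP.
  rewrite !perm1 /= in o12 * => o01.
  exists (f (@Ordinal 3 1 isT)), (f (@Ordinal 3 2 isT)).
  have -> : ord0 = f (@Ordinal 3 0 isT) by apply: val_inj; rewrite /= f0.
  by rewrite -o01 -o12.
have i0 : 0 < i.
  by rewrite lt0n; apply: contraTneq ord => /(@ord_inj _ _ ord0) ->; rewrite ltnn.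
case/andP: ord => lt0i ltij; have lt0j := ltn_trans lt0i ltij.
exists [ffun a : 'I_3 => if val a == 0 then ord0 else if val a == 1 then i else j].
apply/and4P; split.
- apply/forallP => -[a Ha]; apply/forallP => -[b Hb]; apply/implyP; rewrite !ffunE /=.
  by case: a Ha => [|[|[|a]]] Ha //; case: b Hb => [|[|[|b]]] Hb //= _; rewrite ?ji.
- apply/forallP => -[a Ha]; apply/forallP => -[b Hb]; rewrite !ffunE !perm1 /=.
  case: a Ha => [|[|[|a]]] Ha //; case: b Hb => [|[|[|b]]] Hb //=;
    by rewrite ?ltnn ?lt0i ?ltij ?lt0j // ?ltnNge
               ?(ltnW lt0i) ?(ltnW ltij) ?(ltnW lt0j).
- apply/forallP => x; apply/implyP; rewrite !inE => /orP[/eqP->|/eqP->];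
    by rewrite /occ_positions enum_ord3 /= !ffunE /= ?ji.
- by apply/forallP => y; rewrite inE.
Qed.

Lemma bv_avoids_rise_free m (pi : 'S_m.+1) :
  bv_avoids pat123 X02 Y0 pi = rise_free (perm_seq pi).
Proof.
have hd : head 0 (perm_seq pi) = pi ord0 by rewrite -nth0 (nth_perm_seq pi ord0).
rewrite /bv_avoids /rise_free hd; apply/negP/(sortedP 0) => [noP i | srt].
  rewrite size_perm_seq => lt_i; apply/implyP => lt0i.
  rewrite leqNgt; apply/negP => ltii.
  apply: noP; apply/bv_containsP; exists (Ordinal (ltnW lt_i)), (Ordinal lt_i).
  rewrite -(nth_perm_seq pi (Ordinal lt_i)).
  by rewrite -(nth_perm_seq pi (Ordinal (ltnW lt_i))) lt0i.
case/bv_containsP=> i [j [ji /andP[lt0i ltij]]].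
have := srt i; rewrite size_perm_seq -ji ltn_ord => /(_ isT).
by rewrite /no_rise_above !nth_perm_seq lt0i leqNgt ltij.
Qed.

Lemma a_nk_avoiders m k : 0 < k -> a_nk m.+1 k = size (avoiders m.+1 k).
Proof.
move=> k0; rewrite /a_nk /avoiders size_filter -(seq.permP (perm_eq_perm_seqs m.+1)).
rewrite count_map cardE size_filter /enum_mem filter_predT; apply: eq_count => pi.
rewrite /= inE bv_avoids_rise_free; congr (_ && _).
rewrite -nth0 (nth_perm_seq pi ord0).
apply/existsP/eqP => [[i /andP[/eqP i0 /eqP <-]] | pi0].
  by congr (val (pi _)).+1.-1; apply: val_inj.
by exists ord0; rewrite eqxx /= pi0 prednK.
Qed.

Theorem mainTheorem11 (n k : nat) : 1 <= n -> 1 <= k <= n ->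
  a_nk n k = if k <= n - 2 then (k - 1)`! * k ^ (n - k) else (n - 1)`!.
Proof.
case: n => [|m] // _ /andP[k0 km].
rewrite a_nk_avoiders // -(subnKC km) size_avoiders // subnKC // !subn1 /=.
case: ifP => // /negbT; rewrite -ltnNge => lt_k.
have [-> | ek] : k = m.+1 \/ k = m by lia.
  by rewrite subnn muln1.
rewrite ek subSnn expn1 in k0 *.
by case: m k0 {km lt_k ek} => // m _; rewrite factS mulnC.
Qed.
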